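(* Let $1\le t_1<t_2$ and $n\ge t_1+t_2$ be integers, and let $G=G_n\langle t_1,t_2\rangle$. If $t_2\ne 2t_1$, then $G$ contains a hole of length $(t_1+t_2)/\gcd(t_1,t_2)$.
   Context: For integers $n\ge 2$, $k\ge 1$ and $1\le t_1<t_2<\cdots<t_k\le n-1$, the Toeplitz graph $G_n\langle t_1,\ldots,t_k\rangle$ is the simple graph with vertex set $[n]=\{1,\ldots,n\}$ in which two distinct vertices $i,j$ are adjacent if and only if $|i-j|\in\{t_1,\ldots,t_k\}$. A hole is an induced (chordless) cycle of length at least $4$. *)

From mathcomp Require Import all_boot.
Set Implicit Arguments. Unset Strict Implicit. Unset Printing Implicit Defensive.

Definition toeplitz_adj (n : nat) (ts : seq nat) (i j : nat) : bool :=
  [&& 1 <= i <= n, 1 <= j <= n, i != j & ((i - j) + (j - i)) \in ts].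

(* A hole of G: an induced (chordless) cycle of length >= 4, given as the
   sequence c = [v_0; ...; v_{L-1}] of its distinct vertices in cyclic order. *)
Definition is_hole (adj : nat -> nat -> bool) (vert : pred nat) (c : seq nat) : Prop :=
  [/\ 4 <= size c, uniq c, all vert c &
      forall p q, p < q < size c ->
        adj (nth 0 c p) (nth 0 c q) = (q == p.+1) || ((p == 0) && (q == (size c).-1))].

Definition toeplitz_hole (n : nat) (ts : seq nat) (c : seq nat) : Prop :=
  is_hole (toeplitz_adj n ts) (fun v => 1 <= v <= n) c.

From mathcomp Require Import all_boot zify.

(* Write t1 = a d and t2 = b d with d = gcd(t1, t2), so that a and b are
   coprime, and put L = a + b.  On the L vertices 1 + (k a mod L) d, k < L,
   two vertices are at distance t1 or t2 exactly when their residues differ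
   by a modulo L (because t1 + t2 = L d), i.e. exactly when their indices k
   differ by 1 modulo L, as a is invertible modulo L.  They therefore induce
   a cycle of length L, which is a hole because L >= 4 unless (a, b) = (1, 2),
   i.e. t2 = 2 t1. *)

Lemma coprime_divn_gcd m n :
  0 < gcdn m n -> coprime (m %/ gcdn m n) (n %/ gcdn m n).
Proof.
move=> d_gt0; rewrite /coprime -(eqn_pmul2r d_gt0) mul1n muln_gcdl.
by rewrite !divnK ?dvdn_gcdl ?dvdn_gcdr.
Qed.

Lemma eqn_modMr_coprime L a x y :
  coprime L a -> (x * a == y * a %[mod L]) = (x == y %[mod L]).
Proof.
move=> coLa; wlog le_yx : x y / y <= x.
  move=> wlog_le; case: (leqP y x) => [|/ltnW]; first exact: wlog_le.
  by rewrite eq_sym [RHS]eq_sym; apply: wlog_le.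
by rewrite !eqn_mod_dvd ?leq_mul2r ?le_yx ?orbT // -mulnBl Gauss_dvdl.
Qed.

Lemma toeplitz_adjSS n ts i j : i < n -> j < n ->
  toeplitz_adj n ts i.+1 j.+1 = (i != j) && ((i - j) + (j - i) \in ts).
Proof. by move=> lt_in lt_jn; rewrite /toeplitz_adj !subSS eqSS lt_in lt_jn. Qed.

(* Since s + t is the modulus, distance t is distance s taken the other way round. *)
Lemma dist_pair_eq_shift s t x y : 0 < s -> 0 < t -> x < s + t -> y < s + t ->
  (x != y) && ((x - y) + (y - x) \in [:: s; t]) =
  (y == (x + s) %% (s + t)) || (x == (y + s) %% (s + t)).
Proof.
move=> s_gt0 t_gt0 lt_x lt_y.
have addn_mod z : z < s + t ->
    (z + s) %% (s + t) = if z + s < s + t then z + s else z + s - (s + t).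
  move=> lt_z; case: ifP => [/modn_small //|ge_z].
  have -> : z + s = (z + s - (s + t)) + (s + t) by lia.
  by rewrite modnDr modn_small; lia.
rewrite !addn_mod // !inE.
by case: ifP => ?; case: ifP => ?; apply/idP/idP; lia.
Qed.

Lemma eqn_mod_succ_cycle L p q : p < q < L ->
  (q == p.+1 %[mod L]) || (p == q.+1 %[mod L]) =
  (q == p.+1) || ((p == 0) && (q == L.-1)).
Proof.
move=> /andP[lt_pq lt_qL].
have lt_pL := ltn_trans lt_pq lt_qL.
rewrite (modn_small lt_qL) (modn_small lt_pL) (modn_small (leq_ltn_trans lt_pq lt_qL)).
case: (ltnP q.+1 L) => [lt_q1L|le_Lq1].
  by rewrite modn_small //; apply/idP/idP; lia.
have -> : q.+1 = L by lia.
by rewrite modnn; apply/idP/idP; lia.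
Qed.

Definition toeplitz_cycle (a b d : nat) : seq nat :=
  [seq (k * a %% (a + b) * d).+1 | k <- iota 0 (a + b)].

Section CoprimeHole.

Variables a b d : nat.
Hypotheses (a_gt0 : 0 < a) (b_gt0 : 0 < b) (d_gt0 : 0 < d).
Hypothesis coprime_ab : coprime a b.

Let L := a + b.

Let residue k := k * a %% L * d.

Let coprime_La : coprime L a.
Proof. by rewrite coprime_sym /coprime gcdnDl. Qed.

Lemma residue_lt k : residue k < L * d.
Proof. by rewrite /residue ltn_mul2r d_gt0 ltn_pmod // addn_gt0 a_gt0. Qed.

Lemma residue_shift k : (residue k + a * d) %% (L * d) = residue k.+1.
Proof. by rewrite /residue -mulnDl -muln_modl modnDml mulSn addnC. Qed.

Lemma residue_inj : {in gtn L &, injective residue}.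
Proof.
move=> i j lt_iL lt_jL /eqP; rewrite eqn_pmul2r // -/(_ == _ %[mod L]).
by rewrite eqn_modMr_coprime // !modn_small // => /eqP.
Qed.

Lemma nth_toeplitz_cycle k : k < L -> nth 0 (toeplitz_cycle a b d) k = (residue k).+1.
Proof. by move=> lt_kL; rewrite (nth_map 0) ?size_iota // nth_iota. Qed.

Lemma toeplitz_cycle_adj n p q : L * d <= n -> p < L -> q < L ->
  toeplitz_adj n [:: a * d; b * d]
    (nth 0 (toeplitz_cycle a b d) p) (nth 0 (toeplitz_cycle a b d) q) =
  (q == p.+1 %[mod L]) || (p == q.+1 %[mod L]).
Proof.
move=> le_n lt_pL lt_qL; rewrite !nth_toeplitz_cycle //.
have lt_n k : residue k < n by apply: leq_trans (residue_lt k) le_n.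
have modulusE : a * d + b * d = L * d by rewrite mulnDl.
rewrite toeplitz_adjSS // dist_pair_eq_shift ?modulusE ?residue_lt //;
  rewrite ?muln_gt0 ?a_gt0 ?b_gt0 ?d_gt0 //.
rewrite !residue_shift /residue !eqn_pmul2r //.
by rewrite -!/(_ == _ %[mod L]) !eqn_modMr_coprime.
Qed.

Lemma toeplitz_cycle_hole n : 4 <= L -> L * d <= n ->
  toeplitz_hole n [:: a * d; b * d] (toeplitz_cycle a b d).
Proof.
move=> L_ge4 le_n; have size_cycle : size (toeplitz_cycle a b d) = L.
  by rewrite size_map size_iota.
split; rewrite ?size_cycle //.
- rewrite map_inj_in_uniq ?iota_uniq // => i j; rewrite !mem_iota !add0n.
  by move=> lt_iL lt_jL [/residue_inj]; apply.
- by apply/allP => _ /mapP[k _ ->]; apply: leq_trans (residue_lt k) le_n.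
move=> p q /andP[lt_pq lt_qL].
rewrite toeplitz_cycle_adj //; last exact: ltn_trans lt_qL.
by rewrite eqn_mod_succ_cycle ?lt_pq.
Qed.

End CoprimeHole.

Theorem lemma3p2 (n t1 t2 : nat) :
  1 <= t1 -> t1 < t2 -> t1 + t2 <= n -> t2 != t1 * 2 ->
  exists c : seq nat,
    toeplitz_hole n [:: t1; t2] c /\ size c = (t1 + t2) %/ gcdn t1 t2.
Proof.
move=> t1_gt0 lt_t12 le_n ne_t2.
set d := gcdn t1 t2; have d_gt0 : 0 < d by rewrite gcdn_gt0 t1_gt0.
set a := t1 %/ d; set b := t2 %/ d.
have def_t1 : t1 = a * d by rewrite divnK ?dvdn_gcdl.
have def_t2 : t2 = b * d by rewrite divnK ?dvdn_gcdr.
have a_gt0 : 0 < a by move: t1_gt0; rewrite def_t1 muln_gt0 => /andP[].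
have lt_ab : a < b by move: lt_t12; rewrite def_t1 def_t2 ltn_mul2r => /andP[].
have L_ge4 : 4 <= a + b.
  rewrite leqNgt; apply/negP => lt_L4; have [a1 b2] : a = 1 /\ b = 2 by lia.
  by move: ne_t2; rewrite def_t1 def_t2 a1 b2 mul1n mulnC eqxx.
exists (toeplitz_cycle a b d); rewrite def_t1 def_t2 -mulnDl mulnK //.
split; last by rewrite size_map size_iota.
apply: toeplitz_cycle_hole => //; first exact: ltn_trans lt_ab.
  exact: coprime_divn_gcd.
by rewrite mulnDl -def_t1 -def_t2.
Qed.
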